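(* For every finite chain ring $R$ and every $k\ge1$, the linear simplex code $\mathcal{S}_k^\beta$ is optimal with respect to the Griesmer bound, i.e., its length $n$ satisfies $n=\sum_{i=0}^{k(\mathcal{S}_k^\beta)-1}\left\lceil\frac{d_H(\mathcal{S}_k^\beta)}{q^i}\right\rceil$.
   Context: Let $R$ be a finite commutative chain ring with maximal ideal $\langle\gamma\rangle$, nilpotency index $s$ and residue field $R/\langle\gamma\rangle\cong\mathbb{F}_q$. Fix coset representatives $T=\{e_0,\dots,e_{q-1}\}$ with $e_0=0,e_1=1$, ordered $e_0<\dots<e_{q-1}$; each $r\in R$ is uniquely $\sum_{i=0}^{s-1}r_i\gamma^i$, $r_i\in T$; order $R$ by $x>y$ iff $x_i>y_i$ in $T$ for the largest $i$ with $x_i\neq y_i$; list $R=\{\rho_0,\dots,\rho_{q^s-1}\}$ increasingly. $\mathbf{a}^{(m)}$ is the constant vector of length $m$. Define $G_1^\alpha=(\rho_0\ \cdots\ \rho_{q^s-1})$ and, for $k>1$, $G_k^\alpha$ as the matrix of $q^s$ column blocks, the $j$-th having first row $\boldsymbol{\rho_j}^{(q^{s(k-1)})}$ and $G_{k-1}^\alpha$ below. List $\langle\gamma\rangle$ increasingly as $a_0\gamma<\dots<a_{q^{s-1}-1}\gamma$. Define $G_1^\beta=(1)$ and, for $k>1$, $G_k^\beta$ as the matrix with column blocks: first a block with first row $\mathbf{1}^{(q^{s(k-1)})}$ and $G_{k-1}^\alpha$ below; then for each $j=0,\dots,q^{s-1}-1$ a block with first row the constant vector with entry $a_j\gamma$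 and $G_{k-1}^\beta$ below. $\mathcal{S}_k^\beta$ is the $R$-submodule generated by the rows of $G_k^\beta$. For a linear code $\mathcal{C}\subseteq R^n$, $d_H(\mathcal{C})$ is its minimum Hamming distance and $k(\mathcal{C})$ is the minimum rank of a free $R$-submodule $\mathcal{C}'\subseteq R^n$ with $\mathcal{C}\subseteq\mathcal{C}'$. The Griesmer bound states $n\ge\sum_{i=0}^{k(\mathcal{C})-1}\lceil d_H(\mathcal{C})/q^i\rceil$; a code is optimal with respect to it when equality holds. *)

From HB Require Import structures.
From mathcomp Require Import all_boot all_order all_algebra.
Set Implicit Arguments. Unset Strict Implicit. Unset Printing Implicit Defensive.
Import Order.TTheory GRing.Theory.
Local Open Scope ring_scope.

Section ChainRing.
Variable R : finComUnitRingType.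

Definition is_ideal (I : {set R}) : Prop :=
  [/\ 0 \in I, (forall x y, x \in I -> y \in I -> x + y \in I)
    & (forall r x, x \in I -> r * x \in I)].

Definition chain_ring : Prop :=
  forall I J : {set R}, is_ideal I -> is_ideal J -> I \subset J \/ J \subset I.

Definition gideal (g : R) : {set R} := [set g * y | y : R].

Definition maximal_ideal_gen (g : R) : Prop :=
  [/\ is_ideal (gideal g), 1 \notin gideal g &
      forall J : {set R}, is_ideal J -> gideal g \subset J ->
        J = gideal g \/ J = setT].

Definition nilp_index (g : R) (s : nat) : Prop :=
  g ^+ s = 0 /\ forall i, (i < s)%N -> g ^+ i != 0.

(* T is a complete set of coset representatives of R / <g> (listed in order
   e_0 < e_1 < ... < e_{q-1}); q = size T *)
Definition coset_reps (g : R) (T : seq R) : Prop :=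
  forall r : R, count (fun e => r - e \in gideal g) T = 1%N.

(* r = sum_{i<s} e_{f i} g^i ; rank r = sum_i f(i) q^i, so that ordering by
   rank is the order of the paper (compare the digit at the largest index
   where they differ). *)
Definition Rrank (g : R) (s : nat) (T : seq R) (r : R) : nat :=
  match [pick f : {ffun 'I_s -> 'I_(size T)} |
           r == \sum_(i < s) T`_(f i) * g ^+ i] with
  | Some f => (\sum_(i < s) (f i : nat) * (size T) ^ i)%N
  | None => 0%N
  end.

(* rho_0 < rho_1 < ... < rho_{q^s - 1} : the elements of R listed increasingly *)
Definition elts_sorted (g : R) (s : nat) (T : seq R) : seq R :=
  sort (fun x y => Rrank g s T x <= Rrank g s T y)%N (enum R).

(* a_0 g < ... < a_{q^{s-1}-1} g : the elements of <g> listed increasingly *)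
Definition ideal_sorted (g : R) (s : nat) (T : seq R) : seq R :=
  [seq x <- elts_sorted g s T | x \in gideal g].

(* columns of G_k^alpha (each column is a list of length k) *)
Fixpoint colsA (rho : seq R) (k : nat) : seq (seq R) :=
  match k with
  | 0 => [:: [::]]
  | k'.+1 => flatten [seq [seq x :: c | c <- colsA rho k'] | x <- rho]
  end.

(* columns of G_k^beta, k >= 1 *)
Fixpoint colsB (rho I : seq R) (k : nat) : seq (seq R) :=
  match k with
  | 0 => [::]
  | k'.+1 =>
    match k' with
    | 0 => [:: [:: 1]]
    | _.+1 => [seq 1 :: c | c <- colsA rho k'] ++
              flatten [seq [seq a :: c | c <- colsB rho I k'] | a <- I]
    end
  end.

Definition mx_of_cols (k : nat) (cols : seq (seq R)) : 'M[R]_(k, size cols) :=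
  \matrix_(i < k, j < size cols) (nth [::] cols j)`_i.

Definition colsBeta (g : R) (s : nat) (T : seq R) (k : nat) : seq (seq R) :=
  colsB (elts_sorted g s T) (ideal_sorted g s T) k.

Definition G_beta (g : R) (s : nat) (T : seq R) (k : nat) :
  'M[R]_(k, size (colsBeta g s T k)) := mx_of_cols k (colsBeta g s T k).

Definition S_beta (g : R) (s : nat) (T : seq R) (k : nat) :
  {set 'rV[R]_(size (colsBeta g s T k))} :=
  [set m *m G_beta g s T k | m : 'rV[R]_k].

Definition hamming (n : nat) (x y : 'rV[R]_n) : nat := #|[set i | x 0 i != y 0 i]|.

Definition dH (n : nat) (C : {set 'rV[R]_n}) : nat :=
  \big[minn/n]_(x in C) \big[minn/n]_(y in C | y != x) hamming x y.

(* k(C): minimum rank r of a free submodule (image of an injective R-linear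
   map R^r -> R^n, m |-> m *m B) containing C *)
Definition free_rank (n : nat) (C : {set 'rV[R]_n}) : nat :=
  \big[minn/n]_(r < n.+1 | [exists B : 'M[R]_(r, n),
       [forall m : 'rV[R]_r, (m *m B == 0) ==> (m == 0)] &&
       [forall c in C, exists m : 'rV[R]_r, c == m *m B]]) (r : nat).

End ChainRing.

Definition ceil_div (d m : nat) : nat := ((d + m.-1) %/ m)%N.

From HB Require Import structures.
From mathcomp Require Import all_boot all_order all_algebra.
Import Order.TTheory GRing.Theory.
Local Open Scope ring_scope.
Set Implicit Arguments. Unset Strict Implicit.

(* Write N = #|R| = q M with M = #|<g>|.  In a chain ring every nonzero a with
   g a = 0 generates the whole annihilator of g, so a x = y has exactly M
   solutions for each y killed by g.  For a nonzero message m killed by g this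
   lets one count the nonzero entries of m G_k^beta block by block along the
   recursive definition of G_k^beta: there are exactly N^(k-1) of them.  Any
   nonzero message becomes such a message after multiplication by a suitable
   power of g, which cannot increase the weight.  Hence d_H = N^(k-1), the
   generator matrix is injective, k(S) = k, and the length
   M^(k-1) (q^(k-1) + ... + q + 1) is exactly the Griesmer sum of the
   ceil(N^(k-1) / q^i) = q^(k-1-i) M^(k-1). *)

Lemma gidealP (R : finComUnitRingType) (a x : R) :
  reflect (exists y, x = a * y) (x \in gideal a).
Proof. by apply: (iffP imsetP) => [[y _ ->]|[y ->]]; exists y. Qed.

Lemma mem_gideal (R : finComUnitRingType) (a : R) : a \in gideal a.
Proof. by apply/gidealP; exists 1; rewrite mulr1. Qed.

Lemma gideal_is_ideal (R : finComUnitRingType) (a : R) : is_ideal (gideal a).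
Proof.
split=> [|x y|r x].
- by apply/gidealP; exists 0; rewrite mulr0.
- move=> /gidealP[x' ->] /gidealP[y' ->]; apply/gidealP.
  by exists (x' + y'); rewrite mulrDr.
- by move=> /gidealP[x' ->]; apply/gidealP; exists (r * x'); rewrite mulrCA.
Qed.

Lemma card_coset_reps (R : finComUnitRingType) (g : R) (T : seq R) :
  coset_reps g T -> #|R| = (size T * #|gideal g|)%N.
Proof.
move=> reps.
transitivity (\sum_(r : R) \sum_(e <- T) ((r - e)%R \in gideal g : nat))%N.
  rewrite -sum1_card; apply: eq_bigr => r _.
  by rewrite -(reps r) -sum1_count big_mkcond.
rewrite exchange_big -sum1_size big_distrl /=; apply: eq_bigr => e _.
rewrite mul1n -sum1_card [RHS]big_mkcond (reindex_inj (addIr e)) /=.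
by apply: eq_bigr => r _; rewrite addrK; case: (_ \in _).
Qed.

Section ChainRing.
Variables (R : finComUnitRingType) (g : R).
Hypotheses (chainR : chain_ring R) (maxg : maximal_ideal_gen g).

Lemma unit_notin_gideal x : x \notin gideal g -> x \is a GRing.unit.
Proof.
case: maxg => _ _ maxI xNg.
case: (chainR (gideal_is_ideal x) (gideal_is_ideal g)) => sub.
  by rewrite (subsetP sub _ (mem_gideal x)) in xNg.
case: (maxI _ (gideal_is_ideal x) sub) => [eq_xg|xT].
  by rewrite -eq_xg mem_gideal in xNg.
have /gidealP[y y1] : (1 : R) \in gideal x by rewrite xT inE.
by apply/unitrPr; exists y.
Qed.

Section Socle.
Variable a : R.
Hypotheses (ga0 : g * a = 0) (a_neq0 : a != 0).

Lemma socle_mulr_eq0 x : (a * x == 0) = (x \in gideal g).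
Proof.
apply/idP/idP => [ax0|/gidealP[y ->]]; last first.
  by rewrite mulrA (mulrC a) ga0 mul0r.
apply: contraLR ax0 => /unit_notin_gideal xU.
by apply: contra a_neq0 => /eqP ax0; rewrite -(mulrK xU a) ax0 mul0r.
Qed.

Lemma socle_dvdr y : g * y = 0 -> exists x, a * x = y.
Proof.
move=> gy0.
case: (chainR (gideal_is_ideal y) (gideal_is_ideal a)) => sub.
  by case/gidealP: (subsetP sub _ (mem_gideal y)) => x ->; exists x.
case/gidealP: (subsetP sub _ (mem_gideal a)) => z az.
have zNg : z \notin gideal g.
  apply: contra a_neq0 => /gidealP[w zw].
  by rewrite az zw mulrA (mulrC y) gy0 mul0r.
by exists z^-1; rewrite az mulrK // unit_notin_gideal.
Qed.

Lemma card_socle_fibre y :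
  g * y = 0 -> #|[pred x | a * x == y]| = #|gideal g|.
Proof.
move=> /socle_dvdr[x0 ax0].
rewrite -[RHS](card_image (addIr x0)); apply: eq_card => x.
rewrite inE; apply/idP/imageP => [xg|[z zg ->]].
  exists (x - x0); last by rewrite subrK.
  by rewrite -socle_mulr_eq0 mulrBr (eqP xg) ax0 subrr.
by rewrite mulrDr ax0 -subr_eq0 addrK socle_mulr_eq0.
Qed.

End Socle.
End ChainRing.

Section Columns.
Variable R : finComUnitRingType.

Definition seq_dot (u c : seq R) : R := \sum_(i < size u) u`_i * c`_i.

Lemma seq_dot_cons a u x c : seq_dot (a :: u) (x :: c) = a * x + seq_dot u c.
Proof. by rewrite /seq_dot big_ord_recl. Qed.

Lemma seq_dot_eq0 u c : ~~ has (fun a => a != 0) u -> seq_dot u c = 0.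
Proof.
move=> /hasPn u0; apply: big1 => i _.
by move/negPn/eqP: (u0 _ (mem_nth 0 (ltn_ord i))) => ->; rewrite mul0r.
Qed.

Lemma count_colsAS (rho : seq R) (P : pred (seq R)) k :
  count P (colsA rho k.+1) =
  (\sum_(x <- rho) count (fun c => P (x :: c)) (colsA rho k))%N.
Proof.
rewrite /= count_flatten -map_comp sumnE big_map.
by apply: eq_bigr => x _; rewrite /= count_map.
Qed.

Lemma size_colsA (rho : seq R) k :
  perm_eq rho (enum R) -> size (colsA rho k) = (#|R| ^ k)%N.
Proof.
move=> rhoP; elim: k => [//|k IHk].
rewrite -count_predT count_colsAS (perm_big _ rhoP) big_enum /=.
under eq_bigr do rewrite count_predT IHk.
by rewrite sum_nat_const cardT -cardE expnS.
Qed.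

Lemma colsBSS (rho I : seq R) k :
  colsB rho I k.+2 =
  [seq 1 :: c | c <- colsA rho k.+1] ++
  flatten [seq [seq a :: c | c <- colsB rho I k.+1] | a <- I].
Proof. by []. Qed.

Lemma size_colsB (rho I : seq R) q k :
  perm_eq rho (enum R) -> #|R| = (q * size I)%N ->
  size (colsB rho I k.+1) = (\sum_(i < k.+1) q ^ (k - i) * size I ^ k)%N.
Proof.
move=> rhoP cardR; elim: k => [|k IHk]; first by rewrite big_ord1.
rewrite colsBSS size_cat size_map size_colsA // size_flatten /shape -map_comp.
rewrite sumnE big_map; under eq_bigr do rewrite /= size_map IHk.
rewrite big_const_seq count_predT iter_addn_0.
rewrite [RHS]big_ord_recl big_distrl /= subn0 cardR expnMn; congr addn.
by apply: eq_bigr => i _; rewrite subSS -mulnA -expnSr.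
Qed.

Section SocleColumns.
Variables (g : R) (rho I : seq R).
Hypotheses (chainR : chain_ring R) (maxg : maximal_ideal_gen g).
Hypotheses (rhoP : perm_eq rho (enum R)).

Lemma count_colsA_seq_dot_eq u y :
    all (fun a => g * a == 0) u -> has (fun a => a != 0) u -> g * y = 0 ->
  count (fun c => seq_dot u c == y) (colsA rho (size u)) =
  (#|R| ^ (size u).-1 * #|gideal g|)%N.
Proof.
elim: u y => [//|a u IHu] y /= /andP[/eqP ga0 gu0] a_u_nz gy0.
rewrite count_colsAS (perm_big _ rhoP) big_enum /=.
have dot_eq x c :
    (seq_dot (a :: u) (x :: c) == y) = (seq_dot u c == y - a * x).
  by rewrite seq_dot_cons [RHS]eq_sym subr_eq addrC eq_sym.
under eq_bigr do rewrite (eq_count (dot_eq _)).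
have [u_nz|u0] := boolP (has (fun a => a != 0) u).
  have u_gt0 : (0 < size u)%N by case: (u) u_nz.
  under eq_bigr do rewrite IHu // ?mulrBr ?gy0 ?mulrA ?ga0 ?mul0r ?subrr //.
  by rewrite sum_nat_const cardT -cardE mulnA -expnS prednK.
have a_nz : a != 0 by rewrite (negbTE u0) orbF in a_u_nz.
transitivity (\sum_(x in [pred x | (a * x == y)%R]) #|R| ^ size u)%N.
  rewrite [RHS]big_mkcond; apply: eq_bigr => x _; rewrite inE.
  rewrite (eq_count (a2 := fun=> a * x == y)) => [|c]; last first.
    by rewrite /= seq_dot_eq0 // eq_sym subr_eq0 eq_sym.
  by case: (a * x == y); rewrite ?count_predT ?size_colsA ?count_pred0.
by rewrite sum_nat_const (card_socle_fibre chainR maxg ga0 a_nz gy0) mulnC.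
Qed.

Hypotheses (Ig : {subset I <= gideal g}) (sizeI : size I = #|gideal g|).

Lemma count_colsB_seq_dot_neq0 u :
    all (fun a => g * a == 0) u -> has (fun a => a != 0) u ->
  count (fun c => seq_dot u c != 0) (colsB rho I (size u)) =
  (#|R| ^ (size u).-1)%N.
Proof.
elim: u => [//|a u IHu] /andP[/eqP ga0 gu0] a_u_nz.
have [/size0nil u0 | u_gt0] := posnP (size u).
  move: a_u_nz; rewrite u0 /= orbF => a_nz.
  by rewrite seq_dot_cons mulr1 /seq_dot big_ord0 addr0 a_nz.
rewrite [size (a :: u)]/= -(prednK u_gt0) colsBSS prednK //=.
(* The block headed by 1 misses exactly the columns c with seq_dot u c = -a;
   each of the M blocks headed by an element of <g> repeats the count for u. *)
rewrite count_cat count_map count_flatten -map_comp sumnE big_map big_seq.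
have count_I x : x \in I ->
    count (fun c => seq_dot (a :: u) c != 0)
          [seq x :: c | c <- colsB rho I (size u)] =
    count (fun c => seq_dot u c != 0) (colsB rho I (size u)).
  move=> /Ig/gidealP[y ->]; rewrite count_map; apply: eq_count => c /=.
  by rewrite seq_dot_cons mulrCA mulrA ga0 mul0r add0r.
under eq_bigr => x xI do rewrite /= count_I //.
rewrite -big_seq big_const_seq count_predT iter_addn_0 sizeI.
have dot_1 c : (seq_dot (a :: u) (1 :: c) != 0) = ~~ (seq_dot u c == - a).
  by rewrite seq_dot_cons mulr1 addrC addr_eq0.
rewrite (eq_count dot_1) -(size_colsA (size u) rhoP).
rewrite -(count_predC (fun c => seq_dot u c == - a)) addnC; congr addn.
have [u_nz|u0] := boolP (has (fun a => a != 0) u).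
  by rewrite IHu // count_colsA_seq_dot_eq // mulrN ga0 oppr0.
have a_nz : a != 0 by rewrite /= (negbTE u0) orbF in a_u_nz.
rewrite (eq_count (a2 := pred0)) => [|c]; last by rewrite /= seq_dot_eq0 ?eqxx.
rewrite [RHS](eq_count (a2 := pred0)) => [|c]; last first.
  by rewrite /= seq_dot_eq0 // eq_sym oppr_eq0 (negbTE a_nz).
by rewrite !count_pred0.
Qed.

End SocleColumns.
End Columns.

Lemma card_nth_pred (T : Type) (x0 : T) (s : seq T) (P : pred T) :
  #|[pred j : 'I_(size s) | P (nth x0 s j)]| = count P s.
Proof.
rewrite -[in RHS](mkseq_nth x0 s) /mkseq -val_enum_ord -map_comp count_map.
by rewrite -sum1_count big_enum_cond sum1_card.
Qed.

Lemma exists_socle_multiple (R : pzRingType) (V : lmodType R) (g : R) s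
    (v : V) :
  g ^+ s = 0 -> v != 0 -> exists c, g ^+ c *: v != 0 /\ g *: (g ^+ c *: v) = 0.
Proof.
move=> gs0 v_nz.
have ex_c : exists c, g ^+ c.+1 *: v == 0.
  by exists s; rewrite exprSr gs0 mul0r scale0r.
case: (ex_minnP ex_c) => c /eqP gc0 min_c.
exists c; split; last by rewrite scalerA -exprS.
case: c gc0 min_c => [|c] _ min_c; first by rewrite expr0 scale1r.
by apply/negP => /min_c; rewrite ltnn.
Qed.

Definition row_seq (R : Type) k (m : 'rV[R]_k) : seq R :=
  [seq m 0 i | i <- enum 'I_k].

Lemma size_row_seq (R : Type) k (m : 'rV[R]_k) : size (row_seq m) = k.
Proof. by rewrite size_map size_enum_ord. Qed.

Lemma nth_row_seq (R : Type) x0 k (m : 'rV[R]_k) (i : 'I_k) :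
  nth x0 (row_seq m) i = m 0 i.
Proof. by rewrite (nth_map i) ?size_enum_ord // nth_ord_enum. Qed.

Lemma all_row_seq (R : Type) (p : pred R) k (m : 'rV[R]_k) :
  all p (row_seq m) = [forall i, p (m 0 i)].
Proof.
rewrite all_map; apply/allP/forallP => [mp i|mp i _]; last exact: mp.
by apply: mp; rewrite mem_enum.
Qed.

Lemma has_row_seq_neq0 (R : nmodType) k (m : 'rV[R]_k) :
  has (fun a => a != 0) (row_seq m) = (m != 0).
Proof.
rewrite has_map; apply/idP/idP.
  by case/hasP => i _; apply: contraNneq => ->; rewrite mxE eqxx.
apply: contraR => /hasPn m0; apply/eqP/rowP => i; rewrite mxE.
by apply/eqP/negPn/m0; rewrite mem_enum.
Qed.

Definition wH (R : nmodType) n (w : 'rV[R]_n) : nat := #|[set i | w 0 i != 0]|.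

Lemma wH_eq0 (R : nmodType) n (w : 'rV[R]_n) : (wH w == 0)%N = (w == 0).
Proof.
rewrite cards_eq0; apply/eqP/eqP => [/setP w0|->]; last first.
  by apply/setP => i; rewrite !inE mxE eqxx.
by apply/rowP => i; move: (w0 i); rewrite !inE mxE => /negbFE/eqP.
Qed.

Lemma wH_scale (R : pzRingType) n (a : R) (w : 'rV[R]_n) :
  (wH (a *: w) <= wH w)%N.
Proof.
apply: subset_leq_card; apply/subsetP => i; rewrite !inE mxE.
by apply: contra => /eqP->; rewrite mulr0.
Qed.

Lemma hamming_wH (R : finComUnitRingType) n (x y : 'rV[R]_n) :
  hamming x y = wH (x - y).
Proof. by apply: eq_card => i; rewrite !inE !mxE subr_eq0. Qed.

Lemma wH_mul_mx_of_cols (R : finComUnitRingType) k (cols : seq (seq R))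
    (m : 'rV[R]_k) :
  wH (m *m mx_of_cols k cols) =
  count (fun c => seq_dot (row_seq m) c != 0) cols.
Proof.
rewrite -(card_nth_pred [::]); apply: eq_card => j; rewrite !inE !mxE.
rewrite /seq_dot size_row_seq; congr (_ != 0); apply: eq_bigr => i _.
by rewrite nth_row_seq mxE.
Qed.

Section LinearCode.
Variables (R : finComUnitRingType) (k n : nat) (B : 'M[R]_(k, n)).

Lemma dH_mulmx_image d :
    (forall m : 'rV[R]_k, m != 0 -> (d <= wH (m *m B))%N) ->
    (exists2 m : 'rV[R]_k, m *m B != 0 & wH (m *m B) = d) ->
  dH [set m *m B | m : 'rV[R]_k] = d.
Proof.
move=> wH_ge [m0 m0B_nz m0B_d]; apply/eqP; rewrite eqn_leq; apply/andP; split.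
  apply: (bigmin_inf (T := nat) (m0 *m B)); first exact: imset_f.
  apply: (bigmin_inf (T := nat) 0); last by rewrite hamming_wH subr0 m0B_d.
  by rewrite eq_sym m0B_nz andbT; apply/imsetP; exists 0; rewrite ?mul0mx.
have d_le_n : (d <= n)%N.
  by rewrite -m0B_d; apply: leq_trans (max_card _) (eq_leq (card_ord n)).
apply/(bigmin_geP (T := nat)); split=> // _ /imsetP[mx _ ->].
apply/(bigmin_geP (T := nat)); split=> // _ /andP[/imsetP[my _ ->] neq].
rewrite hamming_wH -mulmxBl; apply: wH_ge; rewrite subr_eq0.
by apply: contraNneq neq => ->.
Qed.

Lemma free_rank_mulmx_image :
    (forall m : 'rV[R]_k, m *m B = 0 -> m = 0) ->
  free_rank [set m *m B | m : 'rV[R]_k] = k.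
Proof.
move=> injB.
have cardC : #|[set m *m B | m : 'rV[R]_k]| = (#|R| ^ k)%N.
  rewrite card_imset ?card_mx ?mul1n // => m1 m2 eqB.
  by apply/eqP; rewrite -subr_eq0; apply/eqP/injB; rewrite mulmxBl eqB subrr.
have rank_le r (B' : 'M[R]_(r, n)) :
      [set m *m B | m : 'rV[R]_k] \subset [set m *m B' | m : 'rV[R]_r] ->
    (k <= r)%N.
  move=> /subset_leq_card subC; have card_gt1 : (1 < #|R|)%N.
    by apply/card_gt1P; exists 0, 1; rewrite eq_sym oner_neq0.
  rewrite -(leq_exp2l _ _ card_gt1) -cardC; apply: leq_trans subC _.
  by apply: leq_trans (leq_imset_card _ _) _; rewrite card_mx mul1n.
have k_le_n : (k <= n)%N.
  apply: (rank_le n 1%:M); apply/subsetP => _ /imsetP[m _ ->].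
  by apply/imsetP; exists (m *m B); rewrite ?mulmx1.
apply/eqP; rewrite eqn_leq; apply/andP; split.
  apply: (bigmin_inf (T := nat) (Ordinal (k_le_n : k < n.+1)%N)) => //=.
  apply/existsP; exists B; apply/andP; split.
    by apply/forallP => m; apply/implyP => /eqP/injB->.
  by apply/forall_inP => _ /imsetP[m _ ->]; apply/existsP; exists m.
apply/(bigmin_geP (T := nat)); split=> // r.
move=> /existsP[B' /andP[_ /forall_inP coverC]].
apply: (rank_le r B'); apply/subsetP => c /coverC/existsP[m /eqP->].
by apply/imsetP; exists m.
Qed.

End LinearCode.

Lemma ceil_div_mull d m : (0 < m)%N -> ceil_div (d * m) m = d.
Proof.
by move=> m_gt0; rewrite /ceil_div divnMDl // divn_small ?addn0 // ltn_predL.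
Qed.

Lemma sum_ceil_div_pow q M k : (0 < q)%N ->
  (\sum_(i < k.+1) ceil_div ((q * M) ^ k) (q ^ i))%N =
  (\sum_(i < k.+1) q ^ (k - i) * M ^ k)%N.
Proof.
move=> q_gt0; apply: eq_bigr => i _.
have -> : ((q * M) ^ k = q ^ (k - i) * M ^ k * q ^ i)%N.
  by rewrite mulnAC -expnD subnK ?expnMn // -ltnS.
by rewrite ceil_div_mull // expn_gt0 q_gt0.
Qed.

Section SimplexBeta.
Variables (R : finComUnitRingType) (g : R) (s : nat) (T : seq R).

Lemma perm_elts_sorted : perm_eq (elts_sorted g s T) (enum R).
Proof. by rewrite /elts_sorted perm_sort. Qed.

Lemma ideal_sorted_sub : {subset ideal_sorted g s T <= gideal g}.
Proof. by move=> x; rewrite mem_filter => /andP[]. Qed.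

Lemma size_ideal_sorted : size (ideal_sorted g s T) = #|gideal g|.
Proof.
rewrite size_filter (permP perm_elts_sorted) -sum1_count big_enum_cond.
by rewrite sum1_card.
Qed.

Lemma size_colsBeta k : coset_reps g T ->
  size (colsBeta g s T k.+1) =
  (\sum_(i < k.+1) size T ^ (k - i) * #|gideal g| ^ k)%N.
Proof.
move=> reps; rewrite -size_ideal_sorted; apply: size_colsB perm_elts_sorted _.
by rewrite size_ideal_sorted; apply: card_coset_reps.
Qed.

Hypotheses (chainR : chain_ring R) (maxg : maximal_ideal_gen g).
Hypothesis gs0 : g ^+ s = 0.

Lemma wH_G_beta_socle k (m : 'rV[R]_k) :
  m != 0 -> g *: m = 0 -> wH (m *m G_beta g s T k) = (#|R| ^ k.-1)%N.
Proof.
move=> m_nz gm0; rewrite /G_beta wH_mul_mx_of_cols.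
have := count_colsB_seq_dot_neq0 chainR maxg perm_elts_sorted ideal_sorted_sub
  size_ideal_sorted (u := row_seq m).
rewrite size_row_seq all_row_seq has_row_seq_neq0 m_nz; apply=> //.
by apply/forallP => i; apply/eqP; move/rowP/(_ i): gm0; rewrite !mxE.
Qed.

Lemma wH_G_beta k (m : 'rV[R]_k) :
  m != 0 -> (#|R| ^ k.-1 <= wH (m *m G_beta g s T k))%N.
Proof.
move=> m_nz; have [c [gcm_nz ggcm0]] := exists_socle_multiple gs0 m_nz.
by rewrite -(wH_G_beta_socle gcm_nz ggcm0) -scalemxAl wH_scale.
Qed.

Lemma G_beta_inj k (m : 'rV[R]_k) : m *m G_beta g s T k = 0 -> m = 0.
Proof.
move/eqP; apply: contraTeq => m_nz; rewrite -wH_eq0 -lt0n.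
apply: leq_trans (wH_G_beta m_nz); rewrite expn_gt0 orbC.
by apply/orP; right; apply/card_gt0P; exists 0.
Qed.

Lemma dH_S_beta k : (0 < k)%N -> dH (S_beta g s T k) = (#|R| ^ k.-1)%N.
Proof.
move=> k_gt0; apply: dH_mulmx_image => [m|]; first exact: wH_G_beta.
have const1_nz : const_mx 1 != 0 :> 'rV[R]_k.
  by apply/eqP => /rowP/(_ (Ordinal k_gt0))/eqP; rewrite !mxE oner_eq0.
have [c [gc_nz ggc0]] := exists_socle_multiple gs0 const1_nz.
exists (g ^+ c *: const_mx 1); last exact: wH_G_beta_socle.
by apply: contra gc_nz => /eqP/G_beta_inj->.
Qed.

Lemma free_rank_S_beta k : free_rank (S_beta g s T k) = k.
Proof. exact/free_rank_mulmx_image/G_beta_inj. Qed.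

End SimplexBeta.

Theorem proposition3p29 (R : finComUnitRingType) (g : R) (s : nat) (T : seq R)
    (k : nat) :
  chain_ring R -> maximal_ideal_gen g -> nilp_index g s ->
  coset_reps g T -> T`_0 = 0 -> T`_1 = 1 -> (1 <= k)%N ->
  size (colsBeta g s T k) =
    (\sum_(i < free_rank (S_beta g s T k))
        ceil_div (dH (S_beta g s T k)) (size T ^ i))%N.
Proof.
move=> chainR maxg [gs0 _] reps _ _ k_gt0.
rewrite free_rank_S_beta // dH_S_beta //.
have q_gt0 : (0 < size T)%N.
  have : (0 < #|R|)%N by apply/card_gt0P; exists 0.
  by rewrite (card_coset_reps reps) muln_gt0 => /andP[].
case: k k_gt0 => // k _.
by rewrite size_colsBeta // (card_coset_reps reps) sum_ceil_div_pow.
Qed.
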